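(* Let $\Sigma$ be a finite totally ordered alphabet, let $n\ge 1$ be an integer, and for every $c\in\Sigma$ let $n_c\ge 0$ be an integer, with $\sum_{c\in\Sigma}n_c=n-1$. Let $\mathcal U$ be the set of tries with $n$ nodes over $\Sigma$ in which, for every $c\in\Sigma$, exactly $n_c$ edges are labeled by $c$. Then $$|\mathcal U|=\frac{1}{n}\prod_{c\in\Sigma}\binom{n}{n_c}.$$
   Context: A trie (cardinal tree) over a finite totally ordered alphabet $\Sigma$ is a rooted ordered tree whose edges are labeled by symbols of $\Sigma$ such that (i) the labels of the edges leaving any node are pairwise distinct and (ii) siblings are ordered by the labels of their incoming edges. Two tries are the same if they are equal as edge-labeled rooted trees. *)

From mathcomp Require Import all_boot all_order all_algebra.
Set Implicit Arguments. Unset Strict Implicit. Unset Printing Implicit Defensive.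
Import Order.TTheory.

(* A rooted ordered tree whose edges carry labels in A: a node is given by the
   ordered list of its outgoing edges, each being (label, subtree). *)
Inductive trie (A : Type) : Type :=
  Node : seq (A * trie A) -> trie A.

Section Tries.
Context {d : Order.disp_t} {Sigma : orderType d}.

Fixpoint is_trie (t : trie Sigma) : bool :=
  let: Node es := t in
  sorted (fun x y => (x < y)%O) (map fst es) &&
  (fix all_t (l : seq (Sigma * trie Sigma)) : bool :=
     if l is (_, u) :: l' then is_trie u && all_t l' else true) es.

Fixpoint nodes (t : trie Sigma) : nat :=
  let: Node es := t in
  ((fix sum_t (l : seq (Sigma * trie Sigma)) : nat :=
      if l is (_, u) :: l' then (nodes u + sum_t l')%N else 0%N) es).+1.

Fixpoint edges_lab (c : Sigma) (t : trie Sigma) : nat :=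
  let: Node es := t in
  ((fix sum_t (l : seq (Sigma * trie Sigma)) : nat :=
      if l is (a, u) :: l' then ((a == c) + edges_lab c u + sum_t l')%N
      else 0%N) es).

End Tries.

(** Listing the nodes of a trie in preorder, each by the set of labels of its
    outgoing edges, is a bijection from tries with n nodes onto the words of
    n label sets whose Łukasiewicz walk (start at height 1, step by
    out-degree minus one) first reaches 0 at its very end: the labels of a
    node are sorted, so their set determines the ordered list of children.
    A word with n_c occurrences of each letter c has steps summing to -1, so
    by the cycle lemma exactly one of its n rotations is such a word.  As
    rotation preserves the letter counts and there are prod_c C(n, n_c)
    words with these counts, n |U| = prod_c C(n, n_c). *)

From mathcomp Require Import all_boot all_order all_algebra zify.
From Stdlib Require List.
Set Implicit Arguments. Unset Strict Implicit. Unset Printing Implicit Defensive.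
Import Order.TTheory GRing.Theory Num.Theory.
Local Open Scope ring_scope.

Lemma sumn_eq_In T (f g : T -> nat) (U : seq T) :
  (forall u, List.In u U -> f u = g u) -> sumn (map f U) = sumn (map g U).
Proof.
elim: U => [|u U IH] //= fg; rewrite fg; last by left.
by rewrite IH // => v v_in; apply: fg; right.
Qed.

Lemma all_In T (p : pred T) s x : all p s -> List.In x s -> p x.
Proof. by elim: s => [|y s IH] //= /andP[py ps] [<-|/IH]; auto. Qed.

Definition psum (s : seq int) (i : nat) : int := \sum_(v <- take i s) v.

Lemma psum0 s : psum s 0 = 0.
Proof. by rewrite /psum take0 big_nil. Qed.

Lemma psumS a s i : psum (a :: s) i.+1 = a + psum s i.
Proof. by rewrite /psum /= big_cons. Qed.

Lemma psumD s j i : psum s (j + i) = psum s j + psum (drop j s) i.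
Proof. by rewrite /psum takeD big_cat. Qed.

Lemma psum_take s j i : (i <= j)%N -> psum (take j s) i = psum s i.
Proof. by move=> le_ij; rewrite /psum take_takel. Qed.

Lemma psum_oversize s i : (size s <= i)%N -> psum s i = \sum_(v <- s) v.
Proof. by move=> le_si; rewrite /psum take_oversize. Qed.

Fixpoint first_passage (k : int) (s : seq int) : bool :=
  if s is x :: s' then (0 < k) && first_passage (k + x) s' else k == 0.

Lemma first_passage_cat k s1 s2 :
  first_passage k (s1 ++ s2) <->
  (forall i, (i < size s1)%N -> 0 < k + psum s1 i) /\
  first_passage (k + psum s1 (size s1)) s2.
Proof.
elim: s1 k => [|a s1 IH] k /=; first by rewrite psum0 addr0; split=> [|[]].
split=> [/andP[k_gt0 /IH[pos rest]] | [pos rest]].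
  split; last by rewrite psumS addrA.
  by case=> [|i] lt_i; rewrite ?psum0 ?addr0 // psumS addrA; apply: pos.
apply/andP; split; first by have := pos 0%N erefl; rewrite psum0 addr0.
apply/IH; split; last by rewrite -addrA -psumS.
by move=> i lt_i; rewrite -addrA -psumS; apply: pos.
Qed.

Lemma first_passageP k s :
  first_passage k s <->
  (forall i, (i < size s)%N -> 0 < k + psum s i) /\ k + psum s (size s) = 0.
Proof.
rewrite -[s in first_passage _ s]cats0 first_passage_cat /=.
by split=> -[pos /eqP end0].
Qed.

Section CycleLemma.

Variable b : seq int.
Hypothesis sum_b : \sum_(v <- b) v = -1.
Local Notation n := (size b).
Local Notation P := (psum b).

Lemma first_passage_rot j : (j < n)%N ->
  first_passage 1 (rot j b) <->
  (forall i, (j + i < n)%N -> P j <= P (j + i)) /\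
  (forall i, (i < j)%N -> P j < P i).
Proof.
move=> lt_jn; rewrite /rot first_passage_cat first_passageP size_drop size_take lt_jn.
have total : P j + psum (drop j b) (n - j) = -1.
  by rewrite -psumD (subnKC (ltnW lt_jn)) psum_oversize.
split=> [[pos_drop [pos_take _]] | [ge_Pj gt_Pj]].
- split=> i lt_i.
    have /pos_drop : (i < n - j)%N by lia.
    by rewrite psumD; lia.
  by have := pos_take i lt_i; rewrite psum_take ?(ltnW lt_i) //; lia.
- split=> [i lt_i|].
    have /ge_Pj : (j + i < n)%N by lia.
    by rewrite psumD; lia.
  split=> [i lt_ij|]; last by rewrite psum_take //; lia.
  by rewrite psum_take ?(ltnW lt_ij) //; have := gt_Pj i lt_ij; lia.
Qed.

(* The valid rotation starts at the first position where the partial sums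
   attain their minimum. *)
Lemma first_passage_rot_exists : (0 < n)%N ->
  exists2 j, (j < n)%N & first_passage 1 (rot j b).
Proof.
move=> n_gt0.
pose is_min m := (m < n)%N && all (fun t => P m <= P t) (iota 0 n).
have [m0 min_m0] : exists m, is_min m.
  case: (arg_minP (fun i : 'I_n => P i) (isT : xpredT (Ordinal n_gt0))).
  move=> i _ min_i; exists i; rewrite /is_min ltn_ord.
  by apply/allP=> t; rewrite mem_iota add0n => lt_tn; apply: (min_i (Ordinal lt_tn)).
case: (ex_minnP (ex_intro _ m0 min_m0)) => j /andP[lt_jn /allP min_j] first_j.
exists j => //; apply/first_passage_rot => //; split=> [i lt_i | i lt_ij].
  by apply: min_j; rewrite mem_iota.
rewrite ltNge; apply/negP => le_Pi.
have : is_min i.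
  rewrite /is_min (ltn_trans lt_ij lt_jn); apply/allP=> t /min_j.
  exact: le_trans.
by move/first_j; rewrite leqNgt lt_ij.
Qed.

Lemma first_passage_rot_unique j j' : (j < n)%N -> (j' < n)%N ->
  first_passage 1 (rot j b) -> first_passage 1 (rot j' b) -> j = j'.
Proof.
move=> lt_jn lt_j'n /(first_passage_rot lt_jn)[ge_j gt_j].
move=> /(first_passage_rot lt_j'n)[ge_j' gt_j'].
case: (ltngtP j' j) => // lt.
  have := ge_j' (j - j')%N; rewrite (subnKC (ltnW lt)) => /(_ lt_jn).
  by have := gt_j _ lt; lia.
have := ge_j (j' - j)%N; rewrite (subnKC (ltnW lt)) => /(_ lt_j'n).
by have := gt_j' _ lt; lia.
Qed.

Lemma cycle_lemma : (0 < n)%N ->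
  (\sum_(j < n) nat_of_bool (first_passage 1 (rot j b)))%N = 1%N.
Proof.
move=> n_gt0; have [j0 lt_j0n ok_j0] := first_passage_rot_exists n_gt0.
rewrite (bigD1 (Ordinal lt_j0n)) //= ok_j0 big1 // => j ne_j.
case ok_j: first_passage => //; move: ne_j.
by rewrite -val_eqE /= (first_passage_rot_unique (ltn_ord j) lt_j0n ok_j ok_j0) eqxx.
Qed.

End CycleLemma.

Section Preorder.

Context {d : Order.disp_t} {Sigma : finOrderType d}.
Local Notation trie := (trie Sigma).

Fixpoint trie_nested_ind (P : trie -> Prop)
    (IH : forall es, (forall u, List.In u (map snd es) -> P u) -> P (Node es))
    (t : trie) : P t :=
  let: Node es := t in
  IH es ((fix F (l : seq (Sigma * trie)) :
            forall u, List.In u (map snd l) -> P u :=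
    match l with
    | [::] => fun u (u_in : List.In u [::]) => match u_in with end
    | e :: l' => fun u u_in =>
        match u_in with
        | or_introl eq_u => eq_ind e.2 P (trie_nested_ind IH e.2) u eq_u
        | or_intror u_in' => F l' u u_in'
        end
    end) es).

Lemma nodesE es : nodes (Node es) = (sumn (map (@nodes _ Sigma) (map snd es))).+1.
Proof. by congr S; elim: es => [|[a u] es IH] //=; rewrite IH. Qed.

Lemma edges_labE c es : edges_lab c (Node es) =
  (count_mem c (map fst es) + sumn (map (@edges_lab _ Sigma c) (map snd es)))%N.
Proof. by elim: es => [|[a u] es /= IH] //=; rewrite IH; lia. Qed.

Lemma is_trieE es : is_trie (Node es) =
  sorted <%O (map fst es) && all (@is_trie _ Sigma) (map snd es).
Proof. by congr andb; elim: es => [|[a u] es IH] //=; rewrite IH. Qed.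

Lemma card_sorted_labels (s : seq Sigma) :
  sorted <%O s -> #|[set x in s]| = size s.
Proof. by move=> /lt_sorted_uniq s_uniq; rewrite cardsE; apply/card_uniqP. Qed.

Fixpoint preorder (t : trie) : seq {set Sigma} :=
  let: Node es := t in
  [set x in map fst es] :: flatten (map (fun e => preorder e.2) es).

Definition preorder_forest (U : seq trie) := flatten (map preorder U).

Lemma preorderE es :
  preorder (Node es) = [set x in map fst es] :: preorder_forest (map snd es).
Proof. by rewrite /= /preorder_forest -map_comp. Qed.

Lemma preorder_forest_cons u U :
  preorder_forest (u :: U) = preorder u ++ preorder_forest U.
Proof. by []. Qed.

Lemma preorder_forest_cat U1 U2 :
  preorder_forest (U1 ++ U2) = preorder_forest U1 ++ preorder_forest U2.
Proof. by rewrite /preorder_forest map_cat flatten_cat. Qed.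

Definition lukasiewicz (w : seq {set Sigma}) : seq int :=
  map (fun S : {set Sigma} => #|S|%:Z - 1) w.

Lemma first_passage_preorder_forest (U : seq trie) k w :
  (forall u, List.In u U -> forall k w,
     first_passage k (lukasiewicz (preorder u ++ w)) =
     (0 < k) && first_passage (k - 1) (lukasiewicz w)) ->
  0 <= k ->
  first_passage (k + (size U)%:Z) (lukasiewicz (preorder_forest U ++ w)) =
  first_passage k (lukasiewicz w).
Proof.
elim: U k => [|u U IH] k walk_U k_ge0 /=; first by rewrite addr0.
rewrite preorder_forest_cons -catA walk_U; last by left.
have -> : 0 < k + (size U).+1%:Z by rewrite ltr_wpDl // ltz_nat.
rewrite -addn1 PoszD addrA addrK; apply: IH => // u' u'_in.
by apply: walk_U; right.
Qed.

Lemma first_passage_preorder t : is_trie t -> forall k w,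
  first_passage k (lukasiewicz (preorder t ++ w)) =
  (0 < k) && first_passage (k - 1) (lukasiewicz w).
Proof.
elim/trie_nested_ind: t => es IH; rewrite is_trieE => /andP[sorted_es trie_es] k w.
rewrite preorderE cat_cons /= card_sorted_labels // size_map.
have [k_gt0 /=|//] := ltrP 0 k.
rewrite -(size_map snd) addrCA addrC first_passage_preorder_forest ?subr_ge0 //.
by move=> u u_in; apply: IH => //; apply: all_In trie_es u_in.
Qed.

Lemma first_passage_decode w (k : nat) :
  first_passage k%:Z (lukasiewicz w) ->
  exists U : seq trie, [/\ all is_trie U, size U = k & w = preorder_forest U].
Proof.
elim: w k => [|S w IH] k /=; first by move=> /eqP[->]; exists [::].
move=> /andP[]; rewrite ltz_nat => k_gt0.
have -> : k%:Z + (#|S|%:Z - 1) = (k.-1 + #|S|)%N%:Z.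
  by rewrite PoszD -(prednK k_gt0) -addn1 PoszD; lia.
move=> /IH[U [trie_U size_U ->]].
set L := sort <=%O (enum S).
have sorted_L : sorted <%O L by rewrite sort_lt_sorted enum_uniq.
have size_L : size L = #|S| by rewrite size_sort cardE.
have size_take_U : size (take #|S| U) = #|S|.
  by rewrite size_take_min; apply/minn_idPl; rewrite size_U leq_addl.
have fst_es : map fst (zip L (take #|S| U)) = L.
  by apply: unzip1_zip; rewrite size_L size_take_U.
have snd_es : map snd (zip L (take #|S| U)) = take #|S| U.
  by apply: unzip2_zip; rewrite size_L size_take_U.
exists (Node (zip L (take #|S| U)) :: drop #|S| U).
have /andP[trie_take trie_drop] : all is_trie (take #|S| U) && all is_trie (drop #|S| U).
  by rewrite -all_cat cat_take_drop.
split.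
- by apply/andP; split; rewrite ?is_trieE ?fst_es ?snd_es ?sorted_L.
- by rewrite /= size_drop size_U addnK prednK.
- rewrite preorder_forest_cons preorderE fst_es snd_es cat_cons.
  rewrite -preorder_forest_cat cat_take_drop; congr cons.
  by apply/setP=> x; rewrite inE mem_sort mem_enum.
Qed.

Lemma preorder_forest_inj (U1 U2 : seq trie) w1 w2 :
  (forall u, List.In u U1 -> forall t w w', is_trie u -> is_trie t ->
     preorder u ++ w = preorder t ++ w' -> u = t /\ w = w') ->
  all is_trie U1 -> all is_trie U2 -> size U1 = size U2 ->
  preorder_forest U1 ++ w1 = preorder_forest U2 ++ w2 -> U1 = U2 /\ w1 = w2.
Proof.
elim: U1 U2 w1 w2 => [|u U1 IH] [|u2 U2] w1 w2 //= inj_U1.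
move=> /andP[trie_u trie_U1] /andP[trie_u2 trie_U2] [size_U].
rewrite !preorder_forest_cons -!catA.
move=> /(inj_U1 u (or_introl erefl) _ _ _ trie_u trie_u2)[<-].
move=> /(IH _ _ _ (fun v v_in => inj_U1 v (or_intror v_in)) trie_U1 trie_U2 size_U).
by case=> <- <-.
Qed.

Lemma preorder_inj t1 t2 w1 w2 : is_trie t1 -> is_trie t2 ->
  preorder t1 ++ w1 = preorder t2 ++ w2 -> t1 = t2 /\ w1 = w2.
Proof.
elim/trie_nested_ind: t1 t2 w1 w2 => es1 IH [es2] w1 w2.
rewrite !is_trieE => /andP[sorted1 trie1] /andP[sorted2 trie2].
rewrite !preorderE !cat_cons => -[eq_labels eq_rest].
have eq_fst : map fst es1 = map fst es2.
  by apply: lt_sorted_eq => // x; move/setP: eq_labels => /(_ x); rewrite !inE.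
have size_snd : size (map snd es1) = size (map snd es2).
  by rewrite !size_map -(size_map fst es1) eq_fst size_map.
have [eq_snd ->] := preorder_forest_inj IH trie1 trie2 size_snd eq_rest.
by split=> //; rewrite -[es1]zip_unzip -[es2]zip_unzip /unzip1 /unzip2 eq_fst eq_snd.
Qed.

Lemma preorder_first_passage t :
  is_trie t -> first_passage 1 (lukasiewicz (preorder t)).
Proof.
by move=> trie_t; have := first_passage_preorder trie_t 1 [::]; rewrite cats0 => ->.
Qed.

Lemma nodes_preorder t : nodes t = size (preorder t).
Proof.
elim/trie_nested_ind: t => es IH.
rewrite nodesE preorderE /= /preorder_forest size_flatten /shape -[in RHS]map_comp.
by congr S; apply: sumn_eq_In.
Qed.

Definition label_count (c : Sigma) (w : seq {set Sigma}) : nat :=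
  count (fun S : {set Sigma} => c \in S) w.

Lemma edges_lab_preorder c t : is_trie t -> edges_lab c t = label_count c (preorder t).
Proof.
elim/trie_nested_ind: t => es IH; rewrite is_trieE => /andP[sorted_es trie_es].
rewrite edges_labE preorderE /label_count /= inE /preorder_forest count_flatten.
rewrite count_uniq_mem ?lt_sorted_uniq // -[in RHS]map_comp; congr addn.
by apply: sumn_eq_In => u u_in; apply: IH => //; apply: all_In trie_es u_in.
Qed.

Lemma sum_lukasiewicz (w : seq {set Sigma}) :
  \sum_(v <- lukasiewicz w) v = (\sum_c label_count c w)%N%:Z - (size w)%:Z.
Proof.
have -> : (\sum_c label_count c w = \sum_(S <- w) #|S|)%N.
  rewrite /label_count; elim: w => [|S w IH]; first by rewrite big_nil big1.
  rewrite big_cons -IH /= big_split /=; congr addn.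
  by rewrite -sum1_card [RHS]big_mkcond; apply: eq_bigr => c _; case: (c \in S).
elim: w => [|S w IH]; first by rewrite !big_nil.
by rewrite big_cons /= big_cons IH PoszD intS opprD addrACA.
Qed.

End Preorder.

Section Counting.

Context {d : Order.disp_t} {Sigma : finOrderType d}.
Variables (n : nat) (nc : Sigma -> nat).
Local Notation word := (n.-tuple {set Sigma}).

Definition balanced : {set word} :=
  [set w : word | [forall c, label_count c w == nc c]].

Definition tuple_columns (w : word) : {ffun Sigma -> {set 'I_n}} :=
  [ffun c => [set i | c \in tnth w i]].

Definition columns_tuple (f : {ffun Sigma -> {set 'I_n}}) : word :=
  [tuple [set c | i \in f c] | i < n].

Lemma tuple_columnsK : cancel tuple_columns columns_tuple.
Proof.
move=> w; apply: eq_from_tnth => i; rewrite tnth_mktuple.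
by apply/setP=> c; rewrite !inE ffunE inE.
Qed.

Lemma columns_tupleK : cancel columns_tuple tuple_columns.
Proof.
move=> f; apply/ffunP=> c; rewrite ffunE; apply/setP=> i.
by rewrite !inE tnth_mktuple inE.
Qed.

Lemma label_count_tuple (w : word) c : label_count c w = #|tuple_columns w c|.
Proof.
rewrite /label_count -[in LHS](map_tnth_enum w) count_map ffunE.
rewrite -sum1_count cardsE -sum1_card big_enum_cond /=.
by apply: eq_bigl => i; rewrite /= unfold_in.
Qed.

Lemma card_balanced : #|balanced| = (\prod_c 'C(n, nc c))%N.
Proof.
pose F c := [set X : {set 'I_n} | #|X| == nc c].
have -> : balanced = columns_tuple @: [set f in family F].
  rewrite (can2_imset_pre _ columns_tupleK tuple_columnsK).
  apply/setP=> w; rewrite !inE; apply/forallP/familyP => H c.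
    by rewrite inE -label_count_tuple; apply: H.
  by have := H c; rewrite inE -label_count_tuple.
rewrite (card_imset _ (can_inj columns_tupleK)) cardsE card_family.
rewrite foldrE big_map big_enum /=.
by apply: eq_bigr => c _; rewrite card_draws card_ord.
Qed.

Definition encodings : {set word} :=
  [set w in balanced | first_passage 1 (lukasiewicz w)].

Lemma rot_tuple_inj j : injective (@rot_tuple n j {set Sigma}).
Proof. by move=> x y /(congr1 val) /rot_inj /val_inj. Qed.

Lemma rot_tuple_balanced j (w : word) :
  (rot_tuple j w \in balanced) = (w \in balanced).
Proof.
rewrite !inE; apply: eq_forallb => c.
by rewrite /label_count /= /rot count_cat addnC -count_cat cat_take_drop.
Qed.

Lemma card_balanced_rot : (0 < n)%N -> (\sum_c nc c)%N = n.-1 ->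
  #|balanced| = (n * #|encodings|)%N.
Proof.
move=> n_gt0 sum_nc.
have one_rotation (w : word) : w \in balanced ->
    (\sum_(j < n) nat_of_bool (first_passage 1 (lukasiewicz (rot j w))))%N = 1%N.
  rewrite inE => /forallP/(_ _)/eqP count_w.
  have size_w : size (lukasiewicz w) = n by rewrite size_map size_tuple.
  have sum_w : \sum_(v <- lukasiewicz w) v = -1.
    by rewrite sum_lukasiewicz (eq_bigr nc) // sum_nc size_tuple; lia.
  have := cycle_lemma sum_w; rewrite size_w => /(_ n_gt0) <-.
  by apply: eq_bigr => j _; rewrite /lukasiewicz map_rot.
rewrite -sum1_card (eq_bigr _ (fun w w_bal => esym (one_rotation w w_bal))).
rewrite exchange_big /= (eq_bigr (fun _ => #|encodings|)) ?sum_nat_const ?card_ord //.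
move=> j _; rewrite -(card_preimset encodings (@rot_tuple_inj j)) -sum1_card.
rewrite big_mkcond [RHS]big_mkcond; apply: eq_bigr => w _.
rewrite [in RHS]inE [in RHS]in_set /= rot_tuple_balanced.
by case: (w \in balanced); case: first_passage.
Qed.

End Counting.

Lemma preorder_in_encodings {d : Order.disp_t} {Sigma : finOrderType d}
    (n : nat) (nc : Sigma -> nat) (t : trie Sigma) :
  is_trie t ->
  (preorder t \in map val (enum (encodings n nc))) =
  (nodes t == n) && [forall c, edges_lab c t == nc c].
Proof.
move=> trie_t; apply/mapP/andP => [[w] | [/eqP nodes_t /forallP edges_t]].
  rewrite mem_enum !inE => /andP[/forallP balanced_w _] t_code.
  split; first by rewrite nodes_preorder t_code size_tuple.
  by apply/forallP=> c; rewrite edges_lab_preorder // t_code.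
have size_t : size (preorder t) == n by rewrite -nodes_preorder nodes_t.
exists (Tuple size_t) => //.
rewrite mem_enum !inE preorder_first_passage // andbT.
by apply/forallP=> c; rewrite /= -edges_lab_preorder.
Qed.

Lemma trie_list_of_codes {d : Order.disp_t} {Sigma : finOrderType d}
    (l : seq (seq {set Sigma})) :
  uniq l -> (forall w, w \in l -> first_passage 1 (lukasiewicz w)) ->
  exists s : seq (trie Sigma), [/\ List.NoDup s, size s = size l &
    forall t, List.In t s <-> is_trie t /\ preorder t \in l].
Proof.
elim: l => [|w l IH] /=.
  by move=> _ _; exists [::]; split=> // [|t]; [constructor | split=> // -[]].
move=> /andP[w_notin_l l_uniq] valid_l.
have [s [s_nodup size_s s_codes]] :=
  IH l_uniq (fun v v_in => valid_l v (mem_behead (s := w :: l) v_in)).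
have [U [trie_U size_U w_code]] :=
  first_passage_decode (k := 1) (valid_l w (mem_head _ _)).
case: U size_U trie_U w_code => [|t [|]] // _ /andP[trie_t _].
rewrite /preorder_forest /= cats0 => w_code; subst w.
exists (t :: s); split.
- by constructor=> // /s_codes[_]; rewrite (negbTE w_notin_l).
- by rewrite /= size_s.
- move=> t'; rewrite in_cons; split=> [[<-|/s_codes[trie_t' ->]] | [trie_t']].
  + by rewrite eqxx.
  + by rewrite orbT.
  case/orP=> [/eqP eq_code | t'_in]; last by right; apply/s_codes.
  left; have [] // := preorder_inj (w1 := [::]) (w2 := [::]) trie_t trie_t'.
  by rewrite !cats0 eq_code.
Qed.

Theorem theorem1 (d : Order.disp_t) (Sigma : finOrderType d) (n : nat)
    (nc : Sigma -> nat) :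
  (1 <= n)%N ->
  (\sum_(c : Sigma) nc c)%N = n.-1 ->
  exists s : list (trie Sigma),
    List.NoDup s /\
    (forall t : trie Sigma,
        List.In t s <->
        (is_trie t /\ nodes t = n /\ forall c : Sigma, edges_lab c t = nc c)) /\
    ((size s)%:R : rat) = (n%:R)^-1 * \prod_(c : Sigma) ('C(n, nc c))%:R.
Proof.
move=> n_gt0 sum_nc.
pose l := map val (enum (encodings n nc)).
have l_uniq : uniq l by rewrite map_inj_uniq ?enum_uniq //; apply: val_inj.
have l_valid w : w \in l -> first_passage 1 (lukasiewicz w).
  by move=> /mapP[x]; rewrite mem_enum inE => /andP[_ ?] ->.
have [s [s_nodup size_s s_codes]] := trie_list_of_codes l_uniq l_valid.
exists s; split=> //; split=> [t|].
  rewrite s_codes; split=> [[trie_t] | [trie_t [nodes_t edges_t]]].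
    rewrite preorder_in_encodings // => /andP[/eqP nodes_t /forallP edges_t].
    by split=> //; split=> // c; apply/eqP.
  split=> //; rewrite preorder_in_encodings // nodes_t eqxx.
  by apply/forallP=> c; rewrite edges_t.
rewrite size_s size_map -cardE -natr_prod -card_balanced card_balanced_rot //.
by rewrite natrM mulKf // pnatr_eq0 -lt0n.
Qed.
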